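(* Let $K_1,K_{-1}\subseteq[N]$ be disjoint, $x_{\pm}=\mathbb{1}_{K_1}-\mathbb{1}_{K_{-1}}$, and let $A\in\mathbb{R}^{m\times N}$ satisfy the robust bipolar ternary null space property with constants $0<\rho<1$, $\tau>0$ relative to $K_{-1},K_1$. Let $b=Ax_\pm+e$ with $\|e\|_2\le\eta$. Then every solution $\hat z$ of $\min\|z\|_1$ subject to $\|Az-b\|_2\le\eta$ and $z\in[-1,1]^N$ satisfies $\|\hat z-x_\pm\|_1\le\frac{4\tau}{1-\rho}\eta$.
   Context: $\mathbb{1}_S$ has entries $1$ on $S$, $0$ elsewhere; $K=K_1\cup K_{-1}$, $K^C=[N]\setminus K$. $H_{K_1,K_{-1}}=\{w\in\mathbb{R}^N: w_i\le0\text{ for } i\in K_1,\ w_i\ge0 \text{ for } i\in K_{-1}\}$. $A$ satisfies the robust bipolar ternary null space property with constants $\rho,\tau$ relative to $K_{-1},K_1$ if $\sum_{i\in K_{-1}}v_i-\sum_{i\in K_1}v_i\le\rho\sum_{i\in K^C}|v_i|+\tau\|Av\|_2$ for every $v\in H_{K_1,K_{-1}}$. *)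

From mathcomp Require Import all_boot all_order all_algebra.
From mathcomp Require Import reals.
Set Implicit Arguments. Unset Strict Implicit. Unset Printing Implicit Defensive.
Import Order.TTheory GRing.Theory Num.Theory.
Local Open Scope ring_scope.

Definition norm1 (R : realType) (n : nat) (v : 'cV[R]_n) : R :=
  \sum_(i < n) `|v i 0|.
Definition norm2 (R : realType) (n : nat) (v : 'cV[R]_n) : R :=
  Num.sqrt (\sum_(i < n) (v i 0) ^+ 2).

Definition indic (R : realType) (n : nat) (S : {set 'I_n}) : 'cV[R]_n :=
  \col_(i < n) (if i \in S then 1 else 0).

Definition in_H (R : realType) (n : nat) (K1 Km1 : {set 'I_n}) (w : 'cV[R]_n) : Prop :=
  (forall i, i \in K1 -> w i 0 <= 0) /\ (forall i, i \in Km1 -> 0 <= w i 0).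

Definition robust_bipolar_ternary_NSP (R : realType) (m n : nat) (A : 'M[R]_(m, n))
    (rho tau : R) (Km1 K1 : {set 'I_n}) : Prop :=
  forall v : 'cV[R]_n, in_H K1 Km1 v ->
    \sum_(i in Km1) v i 0 - \sum_(i in K1) v i 0
      <= rho * \sum_(i in ~: (K1 :|: Km1)) `|v i 0| + tau * norm2 (A *m v).

Definition feasible (R : realType) (m n : nat) (A : 'M[R]_(m, n)) (b : 'cV[R]_m)
    (eta : R) (z : 'cV[R]_n) : Prop :=
  norm2 (A *m z - b) <= eta /\ (forall i, -1 <= z i 0 <= 1).

From mathcomp Require Import all_boot all_order all_algebra.
From mathcomp Require Import reals.
From mathcomp Require Import ring lra.
Import Order.TTheory GRing.Theory Num.Theory.
Local Open Scope ring_scope.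

(* Put v = zhat - x±.  As zhat lies in the box [-1,1]^N, v lies in the cone
   H_{K_1,K_{-1}}, so ||v||_1 = T + S with the signed mass
   T = sum_{K_{-1}} v - sum_{K_1} v and the tail S = sum_{K^C} |v|.  As x± is
   feasible, minimality of ||zhat||_1 gives S <= T, while ||Av||_2 <= 2 eta and
   the null space property give T <= rho S + 2 tau eta.  Hence
   ||v||_1 <= 2T <= 4 tau eta / (1 - rho). *)

Section EuclideanNorm.
Context {R : realType} {n : nat}.
Implicit Types u w : 'cV[R]_n.

Lemma sqr_norm2 u : norm2 u ^+ 2 = \sum_i u i 0 ^+ 2.
Proof. by rewrite sqr_sqrtr // sumr_ge0 // => i _; apply: sqr_ge0. Qed.

Lemma norm2N u : norm2 (- u) = norm2 u.
Proof.
by rewrite /norm2; congr Num.sqrt; apply: eq_bigr => i _; rewrite mxE sqrrN.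
Qed.

Lemma Lagrange_identity u w :
  \sum_i \sum_j (u i 0 * w j 0 - u j 0 * w i 0) ^+ 2 =
  2 * (norm2 u ^+ 2 * norm2 w ^+ 2 - (\sum_i u i 0 * w i 0) ^+ 2).
Proof.
pose F i j := u i 0 ^+ 2 * w j 0 ^+ 2 - u i 0 * w i 0 * (u j 0 * w j 0).
have -> : \sum_i \sum_j (u i 0 * w j 0 - u j 0 * w i 0) ^+ 2 =
          \sum_i \sum_j (F i j + F j i).
  by apply: eq_bigr => i _; apply: eq_bigr => j _; rewrite /F; ring.
have -> : \sum_i \sum_j (F i j + F j i) = 2 * \sum_i \sum_j F i j.
  under eq_bigr do rewrite big_split.
  by rewrite big_split /= [X in _ + X]exchange_big /=; ring.
rewrite !sqr_norm2 expr2 !big_distrlr -sumrB /=.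
by congr (_ * _); apply: eq_bigr => i _; rewrite -sumrB.
Qed.

Lemma dot_le_norm2M u w : \sum_i u i 0 * w i 0 <= norm2 u * norm2 w.
Proof.
have : 0 <= \sum_i \sum_j (u i 0 * w j 0 - u j 0 * w i 0) ^+ 2.
  by do 2!(apply: sumr_ge0 => ? _); apply: sqr_ge0.
rewrite Lagrange_identity pmulr_rge0 // subr_ge0 -exprMn.
have := mulr_ge0 (sqrtr_ge0 (\sum_i u i 0 ^+ 2)) (sqrtr_ge0 (\sum_i w i 0 ^+ 2)).
rewrite -/(norm2 u) -/(norm2 w); nra.
Qed.

Lemma norm2D u w : norm2 (u + w) <= norm2 u + norm2 w.
Proof.
have nu := sqrtr_ge0 (\sum_i u i 0 ^+ 2); have nw := sqrtr_ge0 (\sum_i w i 0 ^+ 2).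
rewrite -ler_sqr ?nnegrE ?addr_ge0 ?sqrtr_ge0 //.
have -> : norm2 (u + w) ^+ 2 =
    norm2 u ^+ 2 + 2 * \sum_i u i 0 * w i 0 + norm2 w ^+ 2.
  rewrite !sqr_norm2 mulr_sumr -!big_split /=.
  by apply: eq_bigr => i _; rewrite mxE; ring.
have := dot_le_norm2M u w; rewrite -/(norm2 u) -/(norm2 w) in nu nw *; nra.
Qed.

End EuclideanNorm.

Lemma norm2_mulmxB_le {R : realType} {m n : nat} {A : 'M[R]_(m, n)}
    {b : 'cV[R]_m} {eta : R} {z x : 'cV[R]_n} :
  norm2 (A *m z - b) <= eta -> norm2 (A *m x - b) <= eta ->
  norm2 (A *m (z - x)) <= eta + eta.
Proof.
move=> z_eta x_eta.
have -> : A *m (z - x) = (A *m z - b) + - (A *m x - b).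
  by rewrite mulmxBr opprB addrA subrK.
by apply: le_trans (norm2D _ _) _; rewrite norm2N lerD.
Qed.

Section SignedIndicator.
Context {R : realType} {N : nat} {K1 Km1 : {set 'I_N}}.
Hypothesis K1_Km1 : [disjoint K1 & Km1].

Local Notation K := (K1 :|: Km1).
Local Notation xpm := (indic R K1 - indic R Km1).
Local Notation mass v := (\sum_(i in Km1) v i 0 - \sum_(i in K1) v i 0).
Local Notation tail v := (\sum_(i in ~: K) `|v i 0|).
Implicit Types (v z : 'cV[R]_N) (F : 'I_N -> R).

Lemma sum_split_support F :
  \sum_i F i = \sum_(i in K1) F i + \sum_(i in Km1) F i + \sum_(i in ~: K) F i.
Proof.
rewrite (bigID (mem K)) /= -(bigU _ _ _ K1_Km1).
by congr (_ + _); apply: eq_bigl => i; rewrite !inE.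
Qed.

Lemma signed_indic_K1 i : i \in K1 -> xpm i 0 = 1.
Proof. by move=> iK1; rewrite !mxE iK1 (disjointFr K1_Km1 iK1) subr0. Qed.

Lemma signed_indic_Km1 i : i \in Km1 -> xpm i 0 = -1.
Proof. by move=> iKm1; rewrite !mxE iKm1 (disjointFl K1_Km1 iKm1) sub0r. Qed.

Lemma signed_indic_out i : i \in ~: K -> xpm i 0 = 0.
Proof. by rewrite !mxE !inE negb_or => /andP[/negbTE-> /negbTE->]; rewrite subrr. Qed.

Lemma signed_indic_box i : -1 <= xpm i 0 <= 1.
Proof. by rewrite !mxE; case: (i \in K1); case: (i \in Km1); lra. Qed.

Lemma norm1_signed_indic : norm1 xpm = #|K1|%:R + #|Km1|%:R.
Proof.
rewrite /norm1 sum_split_support -[RHS]addr0 -!sumr_const; congr (_ + _ + _).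
- by apply: eq_bigr => i /signed_indic_K1->; rewrite normr1.
- by apply: eq_bigr => i /signed_indic_Km1->; rewrite normrN1.
- by apply: big1 => i /signed_indic_out->; rewrite normr0.
Qed.

Lemma in_H_sub_signed_indic z :
  (forall i, -1 <= z i 0 <= 1) -> in_H K1 Km1 (z - xpm).
Proof.
move=> z_box; split=> i iK; have := z_box i; rewrite mxE [X in _ + X]mxE.
  by rewrite signed_indic_K1 //; lra.
by rewrite signed_indic_Km1 //; lra.
Qed.

Lemma norm1_in_H v : in_H K1 Km1 v -> norm1 v = mass v + tail v.
Proof.
move=> [v_K1 v_Km1]; rewrite /norm1 sum_split_support; congr (_ + _).
rewrite addrC -sumrN; congr (_ + _); apply: eq_bigr => i iK.
  exact/ger0_norm/v_Km1.
exact/ler0_norm/v_K1.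
Qed.

Lemma norm1_signed_indicD_ge v :
  #|K1|%:R + #|Km1|%:R - mass v + tail v <= norm1 (xpm + v).
Proof.
have -> : #|K1|%:R + #|Km1|%:R - mass v + tail v =
    \sum_(i in K1) (1 + v i 0) + \sum_(i in Km1) (1 - v i 0) + tail v.
  by rewrite !big_split sumrN /= !sumr_const; ring.
rewrite /norm1 sum_split_support !lerD ?ler_sum // => i iK; rewrite mxE.
- by rewrite signed_indic_K1 // ler_norm.
- by rewrite signed_indic_Km1 // -normrN opprD opprK ler_norm.
- by rewrite signed_indic_out // add0r.
Qed.

Lemma tail_le_mass v : norm1 (xpm + v) <= norm1 xpm -> tail v <= mass v.
Proof. by have := norm1_signed_indicD_ge v; rewrite norm1_signed_indic; lra. Qed.

End SignedIndicator.

Lemma contraction_sum_le (R : realType) (rho c S T : R) :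
  0 <= rho < 1 -> S <= T -> T <= rho * S + c -> T + S <= 2 * c / (1 - rho).
Proof.
move=> /andP[rho0 rho1] ST Tc; rewrite ler_pdivlMr ?subr_gt0 //.
have : rho * S <= rho * T by rewrite ler_wpM2l.
nra.
Qed.

Theorem theorem3p6 (R : realType) (m N : nat) (K1 Km1 : {set 'I_N})
    (A : 'M[R]_(m, N)) (rho tau eta : R) (e : 'cV[R]_m) (zhat : 'cV[R]_N) :
  [disjoint K1 & Km1] ->
  0 < rho -> rho < 1 -> 0 < tau ->
  robust_bipolar_ternary_NSP A rho tau Km1 K1 ->
  norm2 e <= eta ->
  let xpm := indic R K1 - indic R Km1 in
  let b := A *m xpm + e in
  feasible A b eta zhat ->
  (forall z, feasible A b eta z -> norm1 zhat <= norm1 z) ->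
  norm1 (zhat - xpm) <= 4 * tau / (1 - rho) * eta.
Proof.
move=> K1_Km1 rho_gt0 rho_lt1 tau_gt0 NSP e_eta xpm b [zhat_eta zhat_box] zhat_opt.
set v := zhat - xpm.
have v_H : in_H K1 Km1 v by exact: in_H_sub_signed_indic.
have xpm_eta : norm2 (A *m xpm - b) <= eta by rewrite /b opprD addrA subrr add0r norm2N.
have xpm_feasible : feasible A b eta xpm by split=> // i; exact: signed_indic_box.
have tail_mass : \sum_(i in ~: (K1 :|: Km1)) `|v i 0| <=
                 \sum_(i in Km1) v i 0 - \sum_(i in K1) v i 0.
  by apply: tail_le_mass => //; rewrite /v addrC subrK; exact: zhat_opt xpm_feasible.
have Av_eta := norm2_mulmxB_le zhat_eta xpm_eta.
have mass_le :=
  le_trans (NSP v v_H) (lerD (lexx _) (ler_wpM2l (ltW tau_gt0) Av_eta)).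
rewrite (norm1_in_H K1_Km1 _ v_H).
have -> : 4 * tau / (1 - rho) * eta = 2 * (tau * (eta + eta)) / (1 - rho) by ring.
by apply: contraction_sum_le => //; rewrite (ltW rho_gt0).
Qed.
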